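(* Let $\Sigma\subseteq\mathbb{N}$ be an infinite set. If quantum advantage samplers on $\Sigma$ exist, then $\mathbf{SampBPP}\neq\mathbf{SampBQP}$.
   Context: PPT = classical probabilistic polynomial-time, QPT = quantum polynomial-time; algorithms uniform; $\mathrm{SD}$ is statistical distance; $\mathcal{A}(1^\lambda)$ denotes the output distribution of $\mathcal{A}$ on input $1^\lambda$. QAS on $\Sigma$: a QPT algorithm $\mathcal{A}$ that on input $1^\lambda$ outputs a classical string, such that there is a polynomial $p$ such that for every PPT $\mathcal{B}$ there exists $\lambda^*$ with $\mathrm{SD}(\mathcal{A}(1^\lambda),\mathcal{B}(1^\lambda))>1/p(\lambda)$ for all $\lambda\ge\lambda^*$ in $\Sigma$. A sampling problem is a collection $\{D_x\}_{x\in\{0,1\}^*}$ of distributions with $D_x$ over $\{0,1\}^{q(|x|)}$ for a fixed polynomial $q$. $\mathbf{SampBPP}$: sampling problems for which a PPT $\mathcal{B}$ satisfies $\mathrm{SD}(\mathcal{B}(x,1^{\lfloor1/\epsilon\rfloor}),D_x)\le\epsilon$ for all $x$ and all $\epsilon>0$; $\mathbf{SampBQP}$: the same with $\mathcal{B}$ QPT. *)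

From Stdlib Require Import Reals List Bool Arith ZArith.
Import ListNotations.
Open Scope R_scope.

Definition bits := list bool.
Definition bits_eq_dec : forall x y : bits, {x = y} + {x <> y} :=
  list_eq_dec bool_dec.

Definition unary (n : nat) : bits := repeat true n.

(** polynomials with natural coefficients [c0; c1; ...] = c0 + c1 n + ... *)
Definition natpoly := list nat.
Fixpoint peval (p : natpoly) (n : nat) : nat :=
  match p with
  | [] => 0%nat
  | c :: p' => (c + n * peval p' n)%nat
  end.

Fixpoint allbits (n : nat) : list bits :=
  match n with
  | O => [[]]
  | S n' => map (cons false) (allbits n') ++ map (cons true) (allbits n')
  end.

Definition Dist := list (R * bits).

Definition prob (D : Dist) (y : bits) : R :=
  fold_right (fun wy acc => (if bits_eq_dec (snd wy) y then fst wy else 0) + acc) 0 D.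

Definition outcomes (D : Dist) : list bits := map snd D.

Definition valid_dist (D : Dist) : Prop :=
  Forall (fun wy => 0 <= fst wy) D /\
  fold_right (fun wy acc => fst wy + acc) 0 D = 1.

Definition SD (D1 D2 : Dist) : R :=
  / 2 * fold_right (fun y acc => Rabs (prob D1 y - prob D2 y) + acc) 0
          (nodup bits_eq_dec (outcomes D1 ++ outcomes D2)).

(** * Deterministic polynomial time: Bellantoni–Cook safe recursion
    (functions f(xs ; ys) with normal args xs and safe args ys; the safety
    discipline is enforced by the evaluator: subterms producing normal
    arguments only see normal arguments, and recursion is on the first normal
    argument with the recursive value placed in a safe position).
    The functions [fun xs => bc_eval t xs []] are exactly the polynomial-time
    computable functions on bit strings (Bellantoni–Cook 1992). *)
Inductive BC : Type :=
| BZero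
| BProjN (i : nat)
| BProjS (i : nat)
| BS0
| BS1
| BPred
| BCond
| BRec (g h0 h1 : BC)
| BComp (h : BC) (rs ts : list BC).

Fixpoint bc_eval (t : BC) (xs ys : list bits) {struct t} : bits :=
  match t with
  | BZero => []
  | BProjN i => nth i xs []
  | BProjS i => nth i ys []
  | BS0 => false :: nth 0 ys []
  | BS1 => true :: nth 0 ys []
  | BPred => tl (nth 0 ys [])
  | BCond => match nth 0 ys [] with
             | true :: _ => nth 2 ys []
             | _ => nth 1 ys []
             end
  | BRec g h0 h1 =>
      let xs' := tl xs in
      (fix rec (z : bits) : bits :=
         match z with
         | [] => bc_eval g xs' ys
         | b :: z' =>
             bc_eval (if b then h1 else h0) (z' :: xs') (rec z' :: ys)
         end) (hd [] xs)
  | BComp h rs ts =>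
      bc_eval h (map (fun r => bc_eval r xs []) rs)
                (map (fun s => bc_eval s xs ys) ts)
  end.

(** * PPT algorithms: a polynomial-time function f(x, r) together with a
    polynomial rho; on input x, r is uniform on {0,1}^{rho(|x|)}. *)
Record PPT := { ppt_prog : BC; ppt_rand : natpoly }.

Definition ppt_dist (B : PPT) (x : bits) : Dist :=
  let m := peval (ppt_rand B) (length x) in
  map (fun r => (/ 2 ^ m, bc_eval (ppt_prog B) [x; r] [])) (allbits m).

(** A polynomial-time generator maps x to a description of a
    circuit C_x; C_x is run on |0...0>, all qubits are measured in the
    computational basis and the designated output qubits are output. *)
Definition Cx := (R * R)%type.
Definition cadd (a b : Cx) : Cx := (fst a + fst b, snd a + snd b).
Definition cmul (a b : Cx) : Cx :=
  (fst a * fst b - snd a * snd b, fst a * snd b + snd a * fst b).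
Definition cscale (r : R) (a : Cx) : Cx := (r * fst a, r * snd a).
Definition cnorm2 (a : Cx) : R := fst a * fst a + snd a * snd a.
Definition omega8 : Cx := (/ sqrt 2, / sqrt 2).

Inductive gate := GH (i : nat) | GT (i : nat) | GX (i : nat) | GCNOT (i j : nat).

Record circuit := {
  c_qubits : nat;
  c_out : list nat;
  c_gates : list gate }.

(** decoding of circuit descriptions: numbers in unary 1^k0; format
    <n> <#outputs> <out_1> ... <out_k> then gates: 00<i> = H, 01<i> = T,
    10<i><j> = CNOT, 110<i> = X, anything else ends the list. *)
Fixpoint read_unary (s : bits) : nat * bits :=
  match s with
  | [] => (0%nat, [])
  | false :: s' => (0%nat, s')
  | true :: s' => let (k, r) := read_unary s' in (S k, r)
  end.

Fixpoint read_nums (k : nat) (s : bits) : list nat * bits :=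
  match k with
  | O => ([], s)
  | S k' => let (i, r) := read_unary s in
            let (l, r') := read_nums k' r in (i :: l, r')
  end.

Fixpoint read_gates (fuel : nat) (s : bits) : list gate :=
  match fuel with
  | O => []
  | S f =>
    match s with
    | false :: false :: s' => let (i, r) := read_unary s' in GH i :: read_gates f r
    | false :: true :: s' => let (i, r) := read_unary s' in GT i :: read_gates f r
    | true :: false :: s' =>
        let (i, r) := read_unary s' in
        let (j, r') := read_unary r in GCNOT i j :: read_gates f r'
    | true :: true :: false :: s' =>
        let (i, r) := read_unary s' in GX i :: read_gates f r
    | _ => []
    end
  end.

Definition decode_circuit (s : bits) : circuit :=
  let (n, r) := read_unary s in
  let (k, r1) := read_unary r in
  let (outs, r2) := read_nums k r1 in
  {| c_qubits := n; c_out := outs; c_gates := read_gates (length r2) r2 |}.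

(** states of n qubits: amplitude functions on n-bit strings *)
Fixpoint setbit (i : nat) (b : bool) (s : bits) : bits :=
  match s, i with
  | [], _ => []
  | _ :: s', O => b :: s'
  | c :: s', S i' => c :: setbit i' b s'
  end.

(** gates acting on out-of-range qubits (or CNOT with i = j) act as identity *)
Definition apply_gate (n : nat) (g : gate) (psi : bits -> Cx) : bits -> Cx :=
  match g with
  | GH i =>
      if Nat.ltb i n then
        fun s => cscale (/ sqrt 2)
                   (cadd (psi (setbit i false s))
                         (cscale (if nth i s false then -1 else 1)
                                 (psi (setbit i true s))))
      else psi
  | GT i =>
      if Nat.ltb i n then
        fun s => if nth i s false then cmul omega8 (psi s) else psi s
      else psi
  | GX i =>
      if Nat.ltb i n then fun s => psi (setbit i (negb (nth i s false)) s)
      else psi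
  | GCNOT i j =>
      if Nat.ltb i n && Nat.ltb j n && negb (Nat.eqb i j) then
        fun s => psi (if nth i s false then setbit j (negb (nth j s false)) s else s)
      else psi
  end.

Definition psi0 : bits -> Cx :=
  fun s => if forallb negb s then (1, 0) else (0, 0).

Definition circuit_dist (C : circuit) : Dist :=
  let psi := fold_left (fun ps g => apply_gate (c_qubits C) g ps) (c_gates C) psi0 in
  map (fun s => (cnorm2 (psi s), map (fun i => nth i s false) (c_out C)))
      (allbits (c_qubits C)).

Definition QPT := BC.

Definition qpt_dist (A : QPT) (x : bits) : Dist :=
  circuit_dist (decode_circuit (bc_eval A [x] [])).

Definition QAS (Sigma : nat -> Prop) (A : QPT) : Prop :=
  exists p : natpoly, (forall l, (0 < peval p l)%nat) /\
    forall B : PPT, exists lstar : nat, forall l, (lstar <= l)%nat -> Sigma l ->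
      SD (qpt_dist A (unary l)) (ppt_dist B (unary l)) > / INR (peval p l).

Record SampProblem := {
  sp_len : natpoly;
  sp_dist : bits -> Dist;
  sp_valid : forall x, valid_dist (sp_dist x);
  sp_support : forall x,
    Forall (fun wy => length (snd wy) = peval sp_len (length x)) (sp_dist x) }.

Definition enc_pair (x y : bits) : bits :=
  flat_map (fun b => [b; b]) x ++ [true; false] ++ y.

Definition floor_nat (r : R) : nat := Z.to_nat (Int_part r).

Definition SampBPP (S : SampProblem) : Prop :=
  exists B : PPT, forall (x : bits) (eps : R), 0 < eps ->
    SD (ppt_dist B (enc_pair x (unary (floor_nat (/ eps))))) (sp_dist S x) <= eps.

Definition SampBQP (S : SampProblem) : Prop :=
  exists A : QPT, forall (x : bits) (eps : R), 0 < eps ->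
    SD (qpt_dist A (enc_pair x (unary (floor_nat (/ eps))))) (sp_dist S x) <= eps.

(** Let [A] be a quantum advantage sampler.  Its circuit generator is a
    Bellantoni–Cook program, so on [1^l] it writes a description of length at
    most [PA(l)] for a polynomial [PA]; in particular the circuit has at most
    [PA(l)] output qubits.  The sampling problem [D_x] = "[A(1^|x|)], padded
    with zeros to length [PA(|x|)]" is solved exactly by a uniform quantum
    algorithm, which rewrites the description of [A]'s circuit into one with
    extra dummy output qubits.  If a PPT [B] solved it, the PPT that on [1^l]
    runs [B] on [(1^l, accuracy 1/p(l))] and strips the padding would be
    [1/p(l)]-close to [A(1^l)] for every [l], since stripping cannot increase
    statistical distance; for large [l] in [Sigma] this contradicts [A] being a
    quantum advantage sampler. *)

From Stdlib Require Import Reals List Arith Lia Lra Permutation ZArith.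
Import ListNotations.
Local Open Scope nat_scope.

Fixpoint padd (p q : natpoly) : natpoly :=
  match p, q with
  | [], q => q
  | p, [] => p
  | a :: p', b :: q' => (a + b) :: padd p' q'
  end.

Lemma peval_padd p q n : peval (padd p q) n = peval p n + peval q n.
Proof.
  revert q; induction p as [|a p IH]; intros [|b q]; simpl; try lia.
  rewrite IH; lia.
Qed.

Definition pscale (c : nat) (p : natpoly) : natpoly := map (Nat.mul c) p.

Lemma peval_pscale c p n : peval (pscale c p) n = c * peval p n.
Proof. induction p as [|a p IH]; simpl; [lia|]. rewrite IH; lia. Qed.

Fixpoint pmul (p q : natpoly) : natpoly :=
  match p with
  | [] => []
  | a :: p' => padd (pscale a q) (0 :: pmul p' q)
  end.

Lemma peval_pmul p q n : peval (pmul p q) n = peval p n * peval q n.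
Proof.
  induction p as [|a p IH]; simpl; [lia|].
  rewrite peval_padd, peval_pscale; simpl; rewrite IH; lia.
Qed.

Fixpoint pcomp (p q : natpoly) : natpoly :=
  match p with
  | [] => []
  | a :: p' => padd [a] (pmul q (pcomp p' q))
  end.

Lemma peval_pcomp p q n : peval (pcomp p q) n = peval p (peval q n).
Proof.
  induction p as [|a p IH]; [reflexivity|]; cbn [pcomp].
  rewrite peval_padd, peval_pmul, IH; simpl; lia.
Qed.

Lemma peval_le_mono p m n : m <= n -> peval p m <= peval p n.
Proof.
  intros Hmn; induction p as [|a p IH]; simpl; [lia|].
  pose proof (Nat.mul_le_mono _ _ _ _ Hmn IH); lia.
Qed.

Lemma length_unary n : length (unary n) = n.
Proof. apply repeat_length. Qed.

Lemma skipn_unary i j : skipn i (unary j) = unary (j - i).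
Proof. unfold unary; revert j; induction i as [|i IH]; intros [|j]; simpl; auto. Qed.

Lemma unary_add m n : unary (m + n) = unary m ++ unary n.
Proof. apply repeat_app. Qed.

Lemma concat_repeat_unary k m : concat (repeat (unary m) k) = unary (k * m).
Proof. induction k as [|k IH]; simpl; auto. rewrite IH, unary_add; reflexivity. Qed.

(** * Output length of safe-recursive programs *)

Definition sumlen (xs : list bits) : nat := list_sum (map (@length bool) xs).
Definition maxlen (ys : list bits) : nat := list_max (map (@length bool) ys).

Lemma length_nth_le_sumlen i xs : length (@nth bits i xs []) <= sumlen xs.
Proof.
  unfold sumlen; revert i; induction xs as [|x xs IH]; intros [|i]; simpl; try lia.
  specialize (IH i); lia.
Qed.

Lemma length_nth_le_maxlen i ys : length (@nth bits i ys []) <= maxlen ys.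
Proof.
  unfold maxlen; revert i; induction ys as [|y ys IH]; intros [|i]; simpl; try lia.
  specialize (IH i); lia.
Qed.

Section BC_nested_ind.
Variable P : BC -> Prop.
Hypothesis P_BZero : P BZero.
Hypothesis P_BProjN : forall i, P (BProjN i).
Hypothesis P_BProjS : forall i, P (BProjS i).
Hypothesis P_BS0 : P BS0.
Hypothesis P_BS1 : P BS1.
Hypothesis P_BPred : P BPred.
Hypothesis P_BCond : P BCond.
Hypothesis P_BRec : forall g h0 h1, P g -> P h0 -> P h1 -> P (BRec g h0 h1).
Hypothesis P_BComp : forall h rs ts,
  P h -> Forall P rs -> Forall P ts -> P (BComp h rs ts).

Fixpoint BC_nested_ind (t : BC) : P t :=
  match t with
  | BZero => P_BZero
  | BProjN i => P_BProjN i
  | BProjS i => P_BProjS i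
  | BS0 => P_BS0
  | BS1 => P_BS1
  | BPred => P_BPred
  | BCond => P_BCond
  | BRec g h0 h1 =>
      P_BRec g h0 h1 (BC_nested_ind g) (BC_nested_ind h0) (BC_nested_ind h1)
  | BComp h rs ts =>
      let fix all_ind (l : list BC) : Forall P l :=
        match l with
        | [] => Forall_nil P
        | t :: l' => Forall_cons t (BC_nested_ind t) (all_ind l')
        end in
      P_BComp h rs ts (BC_nested_ind h) (all_ind rs) (all_ind ts)
  end.
End BC_nested_ind.

Fixpoint bc_rec (g h0 h1 : BC) (xs ys : list bits) (z : bits) : bits :=
  match z with
  | [] => bc_eval g xs ys
  | b :: z' => bc_eval (if b then h1 else h0) (z' :: xs) (bc_rec g h0 h1 xs ys z' :: ys)
  end.

Lemma bc_eval_BRec g h0 h1 xs ys :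
  bc_eval (BRec g h0 h1) xs ys = bc_rec g h0 h1 (tl xs) ys (hd [] xs).
Proof. simpl; induction (hd [] xs); simpl; congruence. Qed.

Lemma bc_eval_BComp h rs ts xs ys :
  bc_eval (BComp h rs ts) xs ys =
  bc_eval h (map (fun r => bc_eval r xs []) rs) (map (fun s => bc_eval s xs ys) ts).
Proof. reflexivity. Qed.

(* Safe arguments enter only additively: this is what survives safe recursion,
   where the recursive value is passed in a safe position. *)
Definition length_bounded (t : BC) (P : natpoly) : Prop :=
  forall xs ys, length (bc_eval t xs ys) <= peval P (sumlen xs) + maxlen ys.

Lemma length_bounded_weaken {t P} Q :
  length_bounded t P -> (forall n, peval P n <= peval Q n) -> length_bounded t Q.
Proof. intros HP HPQ xs ys; specialize (HP xs ys); specialize (HPQ (sumlen xs)); lia. Qed.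

Lemma length_bounded_Forall {ts} :
  Forall (fun t => exists P, length_bounded t P) ts ->
  exists P, Forall (fun t => length_bounded t P) ts.
Proof.
  induction 1 as [|t ts [P HP] _ [Q HQ]]; [exists []; constructor|].
  exists (padd P Q); constructor.
  - apply (length_bounded_weaken _ HP); intros n; rewrite peval_padd; lia.
  - refine (Forall_impl _ _ HQ); intros t' Ht'.
    apply (length_bounded_weaken _ Ht'); intros n; rewrite peval_padd; lia.
Qed.

Lemma sumlen_map_le {rs P} xs : Forall (fun r => length_bounded r P) rs ->
  sumlen (map (fun r => bc_eval r xs []) rs) <= length rs * peval P (sumlen xs).
Proof.
  induction 1 as [|r rs Hr _ IH]; [unfold sumlen; simpl; lia|].
  specialize (Hr xs []); unfold sumlen, maxlen in *; simpl in *; lia.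
Qed.

Lemma maxlen_map_le {ts P} xs ys : Forall (fun t => length_bounded t P) ts ->
  maxlen (map (fun t => bc_eval t xs ys) ts) <= peval P (sumlen xs) + maxlen ys.
Proof.
  induction 1 as [|t ts Ht _ IH]; [unfold maxlen; simpl; lia|].
  specialize (Ht xs ys); unfold maxlen in *; simpl in *; lia.
Qed.

Lemma length_bc_rec_le {g h0 h1 Pg Ph} :
  length_bounded g Pg -> length_bounded h0 Ph -> length_bounded h1 Ph ->
  forall xs ys z, length (bc_rec g h0 h1 xs ys z) <=
    length z * peval Ph (length z + sumlen xs) + peval Pg (sumlen xs) + maxlen ys.
Proof.
  intros Hg H0 H1 xs ys; induction z as [|b z IH]; simpl; [apply Hg|].
  set (v := bc_rec g h0 h1 xs ys z) in *.
  assert (Hstep : length (bc_eval (if b then h1 else h0) (z :: xs) (v :: ys))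
                  <= peval Ph (length z + sumlen xs) + Nat.max (length v) (maxlen ys)).
  { destruct b; [apply H1|apply H0]. }
  pose proof (peval_le_mono Ph (length z + sumlen xs) (S (length z + sumlen xs))).
  nia.
Qed.

Lemma length_bounded_BRec {g h0 h1 Pg P0 P1} :
  length_bounded g Pg -> length_bounded h0 P0 -> length_bounded h1 P1 ->
  length_bounded (BRec g h0 h1) (padd (0 :: padd P0 P1) Pg).
Proof.
  intros Hg H0 H1; set (Ph := padd P0 P1).
  assert (H0' : length_bounded h0 Ph)
    by (apply (length_bounded_weaken _ H0); intros n; unfold Ph; rewrite peval_padd; lia).
  assert (H1' : length_bounded h1 Ph)
    by (apply (length_bounded_weaken _ H1); intros n; unfold Ph; rewrite peval_padd; lia).
  intros xs ys; rewrite bc_eval_BRec.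
  assert (Hsplit : length (hd [] xs) + sumlen (tl xs) = sumlen xs)
    by (destruct xs; reflexivity).
  pose proof (length_bc_rec_le Hg H0' H1' (tl xs) ys (hd [] xs)) as Hrec.
  pose proof (peval_le_mono Pg (sumlen (tl xs)) (sumlen xs)).
  rewrite Hsplit in Hrec; rewrite peval_padd; simpl peval; nia.
Qed.

Lemma length_bounded_BComp {h rs ts Ph Pr Pt} :
  length_bounded h Ph -> Forall (fun r => length_bounded r Pr) rs ->
  Forall (fun t => length_bounded t Pt) ts ->
  length_bounded (BComp h rs ts) (padd (pcomp Ph (pscale (length rs) Pr)) Pt).
Proof.
  intros Hh Hrs Hts xs ys.
  rewrite bc_eval_BComp, peval_padd, peval_pcomp, peval_pscale.
  pose proof (Hh (map (fun r => bc_eval r xs []) rs) (map (fun t => bc_eval t xs ys) ts)).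
  pose proof (peval_le_mono Ph _ _ (sumlen_map_le xs Hrs)).
  pose proof (maxlen_map_le xs ys Hts).
  lia.
Qed.

Lemma bc_length_poly_bounded t : exists P, length_bounded t P.
Proof.
  induction t using BC_nested_ind.
  - exists []; intros xs ys; simpl; lia.
  - exists [0; 1]; intros xs ys; simpl.
    pose proof (length_nth_le_sumlen i xs); lia.
  - exists []; intros xs ys; simpl; apply length_nth_le_maxlen.
  - exists [1]; intros xs ys; simpl.
    pose proof (length_nth_le_maxlen 0 ys); lia.
  - exists [1]; intros xs ys; simpl.
    pose proof (length_nth_le_maxlen 0 ys); lia.
  - exists []; intros xs ys; simpl.
    pose proof (length_nth_le_maxlen 0 ys).
    destruct (nth 0 ys []); simpl in *; lia.
  - exists []; intros xs ys; simpl.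
    pose proof (length_nth_le_maxlen 1 ys); pose proof (length_nth_le_maxlen 2 ys).
    destruct (nth 0 ys []) as [|[|] ?]; lia.
  - destruct IHt1 as [Pg Hg], IHt2 as [P0 H0], IHt3 as [P1 H1].
    eexists; apply (length_bounded_BRec Hg H0 H1).
  - destruct IHt as [Ph Hh].
    destruct (length_bounded_Forall H) as [Pr Hrs].
    destruct (length_bounded_Forall H0) as [Pt Hts].
    eexists; apply (length_bounded_BComp Hh Hrs Hts).
Qed.

Lemma length_bounded_unary {t P} l :
  length_bounded t P -> length (bc_eval t [unary l] []) <= peval P l.
Proof.
  intros Ht; specialize (Ht [unary l] []).
  replace (sumlen [unary l]) with l in Ht
    by (unfold sumlen; simpl; rewrite length_unary; lia).
  unfold maxlen in Ht; simpl in Ht; lia.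
Qed.

Fixpoint lead_ones (s : bits) : nat :=
  match s with
  | true :: s' => S (lead_ones s')
  | _ => 0
  end.

Lemma lead_ones_le s : lead_ones s <= length s.
Proof. induction s as [|[|] s IH]; simpl; lia. Qed.

Definition bc_lead : BC := BRec BZero BZero BS1.

Lemma bc_lead_eval a xs ys : bc_eval bc_lead (a :: xs) ys = unary (lead_ones a).
Proof.
  unfold bc_lead; rewrite bc_eval_BRec; cbn [hd tl].
  induction a as [|[|] a IH]; simpl; rewrite ?IH; reflexivity.
Qed.

Definition bc_drop : BC := BRec (BProjS 0) BPred BPred.

Lemma bc_drop_eval a s xs ys : bc_eval bc_drop (a :: xs) (s :: ys) = skipn (length a) s.
Proof.
  unfold bc_drop; rewrite bc_eval_BRec; cbn [hd tl].
  induction a as [|b a IH]; [reflexivity|].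
  transitivity (tl (skipn (length a) s)); [destruct b; simpl; congruence|].
  clear; simpl; revert s; induction (length a) as [|n IHn]; intros [|c s]; simpl; auto.
Qed.

Definition bc_app : BC := BRec (BProjS 0) BS0 BS1.

Lemma bc_app_eval a s xs ys : bc_eval bc_app (a :: xs) (s :: ys) = a ++ s.
Proof.
  unfold bc_app; rewrite bc_eval_BRec; cbn [hd tl].
  induction a as [|[|] a IH]; simpl; rewrite ?IH; reflexivity.
Qed.

Definition bc_double : BC := BRec BZero (BComp BS0 [] [BS0]) (BComp BS1 [] [BS1]).

Lemma bc_double_eval a xs ys :
  bc_eval bc_double (a :: xs) ys = flat_map (fun b => [b; b]) a.
Proof.
  unfold bc_double; rewrite bc_eval_BRec; cbn [hd tl].
  induction a as [|[|] a IH]; simpl; rewrite ?IH; reflexivity.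
Qed.

Definition bc_copies : BC :=
  let step := BComp bc_app [BProjN 1] [BProjS 0] in BRec BZero step step.

Lemma bc_copies_eval a b xs ys :
  bc_eval bc_copies (a :: b :: xs) ys = concat (repeat b (length a)).
Proof.
  unfold bc_copies; rewrite bc_eval_BRec; cbn [hd tl].
  induction a as [|c a IH]; [reflexivity|].
  destruct c; cbn [bc_rec]; rewrite bc_eval_BComp; cbn [map nth tl length repeat concat];
    rewrite bc_app_eval, IH; reflexivity.
Qed.

Definition bc_false : BC := BComp BS0 [] [BZero].

Lemma bc_false_eval xs ys : bc_eval bc_false xs ys = [false].
Proof. reflexivity. Qed.

Fixpoint bc_unary (c : nat) : BC :=
  match c with
  | O => BZero
  | S c => BComp BS1 [] [bc_unary c]
  end.

Lemma bc_unary_eval c xs ys : bc_eval (bc_unary c) xs ys = unary c.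
Proof. induction c as [|c IH]; simpl; rewrite ?IH; reflexivity. Qed.

Fixpoint bc_poly (p : natpoly) : BC :=
  match p with
  | [] => BZero
  | c :: p' => BComp bc_app [bc_unary c] [BComp bc_copies [BProjN 0; bc_poly p'] []]
  end.

Lemma bc_poly_eval p l xs ys : bc_eval (bc_poly p) (unary l :: xs) ys = unary (peval p l).
Proof.
  revert ys; induction p as [|c p IH]; intros ys; [reflexivity|].
  cbn [bc_poly]; rewrite bc_eval_BComp; cbn [map].
  rewrite bc_eval_BComp; cbn [map nth].
  rewrite bc_app_eval, bc_unary_eval, bc_copies_eval, IH; cbn [bc_eval nth].
  rewrite length_unary, concat_repeat_unary, <- unary_add; reflexivity.
Qed.

Lemma div2_succ n : Nat.div2 (S n) = Nat.div2 n + Nat.b2n (Nat.odd n).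
Proof.
  pose proof (Nat.div2_odd n); pose proof (Nat.div2_odd (S n)).
  rewrite Nat.odd_succ, <- Nat.negb_odd in *.
  destruct (Nat.odd n); simpl in *; lia.
Qed.

(* The recursion keeps the parity of the length in front of its half, in unary. *)
Definition bc_half : BC :=
  let step := BComp BCond []
    [BProjS 0; BComp BS1 [] [BPred]; BComp BS0 [] [BComp BS1 [] [BPred]]] in
  BComp BPred [] [BRec bc_false step step].

Lemma bc_half_eval a xs ys : bc_eval bc_half (a :: xs) ys = unary (Nat.div2 (length a)).
Proof.
  unfold bc_half; rewrite bc_eval_BComp; cbn [map]; rewrite bc_eval_BRec; cbn [hd tl].
  enough (Hrec : forall z, bc_rec bc_false _ _ xs ys z
                          = Nat.odd (length z) :: unary (Nat.div2 (length z)))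
    by (rewrite Hrec; reflexivity).
  induction z as [|b z IH]; [reflexivity|].
  cbn [length]; rewrite div2_succ, Nat.odd_succ, <- Nat.negb_odd.
  destruct b; simpl; rewrite IH;
    destruct (Nat.odd (length z)); simpl; rewrite Nat.add_comm; reflexivity.
Qed.

(* The recursion returns [] until it meets the last [false], and counts from there on. *)
Definition bc_last_false_pos : BC :=
  BComp BPred [] [BRec BZero BS1 (BComp BCond [] [BProjS 0; BZero; BS1])].

Lemma bc_last_false_pos_eval u e xs ys :
  bc_eval bc_last_false_pos ((u ++ false :: unary e) :: xs) ys = unary (length u).
Proof.
  unfold bc_last_false_pos; rewrite bc_eval_BComp; cbn [map]; rewrite bc_eval_BRec; cbn [hd tl].
  set (rec := bc_rec BZero BS1 _ xs ys).
  assert (Hones : rec (unary e) = []).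
  { unfold rec, unary; induction e as [|e IH]; [reflexivity|]. simpl; rewrite IH; reflexivity. }
  enough (Hrec : rec (u ++ false :: unary e) = unary (S (length u)))
    by (rewrite Hrec; reflexivity).
  unfold rec in *; induction u as [|[|] u IH]; simpl; [rewrite Hones; reflexivity| |];
    rewrite IH; reflexivity.
Qed.

Lemma length_double x : length (flat_map (fun b : bool => [b; b]) x) = 2 * length x.
Proof. induction x as [|b x IH]; simpl; lia. Qed.

Lemma length_enc_pair x y : length (enc_pair x y) = 2 * length x + 2 + length y.
Proof. unfold enc_pair; rewrite !length_app, length_double; simpl; lia. Qed.

Definition bc_enc_length : BC := BComp bc_half [BComp bc_last_false_pos [BProjN 0] []] [].

Lemma bc_enc_length_eval x e xs :
  bc_eval bc_enc_length (enc_pair x (unary e) :: xs) [] = unary (length x).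
Proof.
  unfold bc_enc_length; rewrite bc_eval_BComp; cbn [map].
  rewrite bc_eval_BComp; cbn [map bc_eval nth].
  replace (enc_pair x (unary e)) with ((flat_map (fun b => [b; b]) x ++ [true]) ++ false :: unary e)
    by (unfold enc_pair; rewrite <- app_assoc; reflexivity).
  rewrite bc_last_false_pos_eval, bc_half_eval, length_unary, length_app, length_double.
  rewrite Nat.add_1_r, Nat.div2_succ_double; reflexivity.
Qed.

Lemma read_unary_eq s : read_unary s = (lead_ones s, skipn (S (lead_ones s)) s).
Proof. induction s as [|[|] s IH]; simpl; rewrite ?IH; reflexivity. Qed.

Lemma read_unary_unary_app n r : read_unary (unary n ++ false :: r) = (n, r).
Proof. unfold unary; induction n as [|n IH]; simpl; rewrite ?IH; reflexivity. Qed.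

Lemma length_read_nums k r : length (fst (read_nums k r)) = k.
Proof.
  revert r; induction k as [|k IH]; intros r; simpl; auto.
  destruct (read_unary r) as [i r']; specialize (IH r').
  destruct (read_nums k r'); simpl in *; auto.
Qed.

Lemma read_nums_pad n j k r :
  read_nums (j + k) (concat (repeat (unary n ++ [false]) j) ++ r) =
  (repeat n j ++ fst (read_nums k r), snd (read_nums k r)).
Proof.
  induction j as [|j IH]; simpl; [destruct (read_nums k r); reflexivity|].
  rewrite <- !app_assoc; simpl; rewrite read_unary_unary_app, IH; reflexivity.
Qed.

Lemma length_c_out_decode d :
  length (c_out (decode_circuit d)) = fst (read_unary (snd (read_unary d))).
Proof.
  unfold decode_circuit; destruct (read_unary d) as [n r1]; cbn [snd].
  destruct (read_unary r1) as [k r2]; cbn [fst].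
  pose proof (length_read_nums k r2); destruct (read_nums k r2); auto.
Qed.

Lemma length_c_out_decode_le d : length (c_out (decode_circuit d)) <= length d.
Proof.
  rewrite length_c_out_decode, !read_unary_eq; cbn [fst snd].
  rewrite lead_ones_le, length_skipn; lia.
Qed.

(* Extra outputs are qubit index [c_qubits C], which is out of range and hence reads 0. *)
Definition pad_outputs (j : nat) (C : circuit) : circuit :=
  {| c_qubits := c_qubits C; c_out := repeat (c_qubits C) j ++ c_out C;
     c_gates := c_gates C |}.

Definition pad_description (j : nat) (d : bits) : bits :=
  let (n, r1) := read_unary d in
  let (k, r2) := read_unary r1 in
  unary n ++ false :: unary j ++ unary k ++ false ::
    concat (repeat (unary n ++ [false]) j) ++ r2.

Lemma decode_pad_description j d :
  decode_circuit (pad_description j d) = pad_outputs j (decode_circuit d).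
Proof.
  unfold pad_description, decode_circuit.
  destruct (read_unary d) as [n r1]; destruct (read_unary r1) as [k r2].
  rewrite read_unary_unary_app, app_assoc, <- unary_add, read_unary_unary_app, read_nums_pad.
  destruct (read_nums k r2); reflexivity.
Qed.

Definition bc_unary_head (t : BC) : BC := BComp bc_lead [t] [].
Definition bc_unary_tail (t : BC) : BC := BComp bc_drop [BComp BS1 [] [bc_unary_head t]] [t].

Lemma bc_unary_head_eval t xs :
  bc_eval (bc_unary_head t) xs [] = unary (fst (read_unary (bc_eval t xs []))).
Proof. unfold bc_unary_head; rewrite bc_eval_BComp, read_unary_eq; apply bc_lead_eval. Qed.

Lemma bc_unary_tail_eval t xs :
  bc_eval (bc_unary_tail t) xs [] = snd (read_unary (bc_eval t xs [])).
Proof.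
  unfold bc_unary_tail; rewrite !bc_eval_BComp; cbn [map].
  rewrite bc_eval_BComp; cbn [map bc_eval nth].
  rewrite bc_unary_head_eval, bc_drop_eval, read_unary_eq; cbn [length fst snd].
  rewrite length_unary; reflexivity.
Qed.

Definition bc_pad_description (jt t : BC) : BC :=
  let n := bc_unary_head t in
  let k := bc_unary_head (bc_unary_tail t) in
  let r2 := bc_unary_tail (bc_unary_tail t) in
  let rows := BComp bc_copies [jt; BComp bc_app [n] [bc_false]] [] in
  BComp bc_app [n] [BComp BS0 [] [BComp bc_app [jt]
    [BComp bc_app [k] [BComp BS0 [] [BComp bc_app [rows] [r2]]]]]].

Lemma bc_pad_description_eval jt t xs j : bc_eval jt xs [] = unary j ->
  bc_eval (bc_pad_description jt t) xs [] = pad_description j (bc_eval t xs []).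
Proof.
  intros Hj; unfold bc_pad_description, pad_description.
  repeat (rewrite bc_eval_BComp; cbn [map]).
  rewrite !bc_unary_head_eval, !bc_unary_tail_eval, Hj.
  destruct (read_unary (bc_eval t xs [])) as [n r1]; cbn [fst snd].
  destruct (read_unary r1) as [k r2]; cbn [fst snd bc_eval nth].
  rewrite !bc_app_eval, bc_copies_eval, bc_false_eval, length_unary; reflexivity.
Qed.

Lemma In_allbits s n : In s (allbits n) <-> length s = n.
Proof.
  revert s; induction n as [|n IH]; intros s; simpl.
  - split; [intros [<-|[]]; reflexivity|]. destruct s; [auto|discriminate].
  - rewrite in_app_iff, !in_map_iff; split.
    + intros [[s' [<- Hs']]|[s' [<- Hs']]]; simpl; f_equal; apply IH; exact Hs'.
    + destruct s as [|[|] s]; simpl; intros Hs; [discriminate| |];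
        injection Hs as Hs; [right|left]; exists s; rewrite IH; auto.
Qed.

Lemma NoDup_allbits n : NoDup (allbits n).
Proof.
  induction n as [|n IH]; simpl; [repeat constructor; auto|].
  apply NoDup_app; try (apply FinFun.Injective_map_NoDup; [intros ? ? H; injection H|]; auto).
  intros s Hs Hs'; apply in_map_iff in Hs as [? [<- _]], Hs' as [? [? _]]; discriminate.
Qed.

Lemma length_setbit i b s : length (setbit i b s) = length s.
Proof. revert i; induction s; intros [|i]; simpl; auto. Qed.

Lemma nth_setbit_same i b s : i < length s -> nth i (setbit i b s) false = b.
Proof. revert i; induction s; intros [|i]; simpl; intros H; auto with arith; lia. Qed.

Lemma nth_setbit_other i j b s : i <> j -> nth j (setbit i b s) false = nth j s false.
Proof. revert i j; induction s; intros [|i] [|j]; simpl; intros H; auto; lia. Qed.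

Lemma setbit_setbit i b b' s : setbit i b (setbit i b' s) = setbit i b s.
Proof. revert i; induction s; intros [|i]; simpl; f_equal; auto. Qed.

Lemma setbit_nth i s : setbit i (nth i s false) s = s.
Proof. revert i; induction s; intros [|i]; simpl; f_equal; auto. Qed.

Definition flip (i : nat) (s : bits) : bits := setbit i (negb (nth i s false)) s.

Lemma length_flip i s : length (flip i s) = length s.
Proof. apply length_setbit. Qed.

Lemma nth_flip i s : i < length s -> nth i (flip i s) false = negb (nth i s false).
Proof. apply nth_setbit_same. Qed.

Lemma flip_involutive i s : i < length s -> flip i (flip i s) = s.
Proof.
  intros Hi; unfold flip at 1; rewrite nth_flip, Bool.negb_involutive by exact Hi.
  unfold flip; rewrite setbit_setbit; apply setbit_nth.
Qed.

(** * Finite sums and statistical distance *)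

Local Open Scope R_scope.

Definition sumR (f : bits -> R) (L : list bits) : R :=
  fold_right (fun y acc => f y + acc) 0 L.

Lemma sumR_ext_in f g L : (forall y, In y L -> f y = g y) -> sumR f L = sumR g L.
Proof.
  induction L as [|a L IH]; simpl; intros H; auto.
  rewrite H, IH; auto.
Qed.

Lemma sumR_zero L : sumR (fun _ => 0) L = 0.
Proof. induction L as [|a L IH]; simpl; [|rewrite IH]; ring. Qed.

Lemma sumR_plus f g L : sumR (fun y => f y + g y) L = sumR f L + sumR g L.
Proof. induction L as [|a L IH]; simpl; [|rewrite IH]; ring. Qed.

Lemma sumR_minus f g L : sumR (fun y => f y - g y) L = sumR f L - sumR g L.
Proof. induction L as [|a L IH]; simpl; [|rewrite IH]; ring. Qed.

Lemma sumR_scal c f L : sumR (fun y => c * f y) L = c * sumR f L.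
Proof. induction L as [|a L IH]; simpl; [|rewrite IH]; ring. Qed.

Lemma sumR_app f L1 L2 : sumR f (L1 ++ L2) = sumR f L1 + sumR f L2.
Proof. induction L1 as [|a L1 IH]; simpl; [|rewrite IH]; ring. Qed.

Lemma sumR_map f g L : sumR f (map g L) = sumR (fun y => f (g y)) L.
Proof. induction L as [|a L IH]; simpl; congruence. Qed.

Lemma sumR_perm f L L' : Permutation L L' -> sumR f L = sumR f L'.
Proof. induction 1; simpl; lra. Qed.

Lemma sumR_le f g L : (forall y, In y L -> f y <= g y) -> sumR f L <= sumR g L.
Proof.
  induction L as [|a L IH]; simpl; intros H; [lra|].
  pose proof (H a (or_introl eq_refl)); pose proof (IH (fun y Hy => H y (or_intror Hy))).
  lra.
Qed.

Lemma Rabs_sumR_le f L : Rabs (sumR f L) <= sumR (fun y => Rabs (f y)) L.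
Proof.
  induction L as [|a L IH]; simpl; [rewrite Rabs_R0; lra|].
  eapply Rle_trans; [apply Rabs_triang | lra].
Qed.

Lemma sumR_comm (F : bits -> bits -> R) U V :
  sumR (fun z => sumR (fun y => F y z) U) V = sumR (fun y => sumR (fun z => F y z) V) U.
Proof.
  induction V as [|b V IH]; simpl; [symmetry; apply sumR_zero|].
  rewrite IH, <- sumR_plus; reflexivity.
Qed.

Lemma sumR_indicator a c U : NoDup U -> In a U ->
  sumR (fun y => if bits_eq_dec a y then c else 0) U = c.
Proof.
  induction U as [|b U IH]; simpl; intros Hnd Hin; [contradiction|].
  inversion Hnd as [|? ? Hb Hnd']; subst.
  destruct (bits_eq_dec a b) as [<-|Hab].
  - rewrite (sumR_ext_in _ (fun _ => 0)), sumR_zero; [ring|].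
    intros y Hy; destruct (bits_eq_dec a y); [subst; contradiction | reflexivity].
  - destruct Hin as [Hin|Hin]; [congruence|].
    rewrite IH; auto; ring.
Qed.

Definition joint_support (P Q : Dist) : list bits :=
  nodup bits_eq_dec (outcomes P ++ outcomes Q).

Lemma SD_sumR P Q :
  SD P Q = / 2 * sumR (fun y => Rabs (prob P y - prob Q y)) (joint_support P Q).
Proof. reflexivity. Qed.

Lemma SD_refl P : SD P P = 0.
Proof.
  rewrite SD_sumR, (sumR_ext_in _ (fun _ => 0)), sumR_zero; [ring|].
  intros y _; rewrite Rminus_diag; apply Rabs_R0.
Qed.

Lemma SD_sym P Q : SD P Q = SD Q P.
Proof.
  rewrite !SD_sumR; f_equal.
  rewrite (sumR_ext_in _ (fun y => Rabs (prob Q y - prob P y)))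
    by (intros; apply Rabs_minus_sym).
  apply sumR_perm, NoDup_Permutation; try apply NoDup_nodup.
  intros y; unfold joint_support; rewrite !nodup_In, !in_app_iff; tauto.
Qed.

Definition fmapD (f : bits -> bits) (D : Dist) : Dist :=
  map (fun wy => (fst wy, f (snd wy))) D.

Lemma prob_fmapD f P z U : NoDup U -> incl (outcomes P) U ->
  prob (fmapD f P) z = sumR (fun y => if bits_eq_dec (f y) z then prob P y else 0) U.
Proof.
  intros HU; induction P as [|[w y0] P IH]; intros HPU.
  - rewrite (sumR_ext_in _ (fun _ => 0)), sumR_zero; [reflexivity|].
    intros y _; destruct (bits_eq_dec (f y) z); reflexivity.
  - cbn [fmapD map prob fold_right fst snd]; fold (fmapD f P); fold (prob (fmapD f P) z).
    rewrite IH by (intros y Hy; apply HPU; right; exact Hy).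
    rewrite <- (sumR_indicator y0 (if bits_eq_dec (f y0) z then w else 0) U HU)
      by (apply HPU; left; reflexivity).
    rewrite <- sumR_plus; apply sumR_ext_in; intros y _; cbn [prob fold_right fst snd].
    fold (prob P y); destruct (bits_eq_dec y0 y); [subst y|];
      destruct (bits_eq_dec (f y0) z); try destruct (bits_eq_dec (f y) z);
      try congruence; ring.
Qed.

Lemma SD_fmapD_le f P Q : SD (fmapD f P) (fmapD f Q) <= SD P Q.
Proof.
  rewrite !SD_sumR; apply Rmult_le_compat_l; [lra|].
  set (U := joint_support P Q).
  assert (HU : NoDup U) by apply NoDup_nodup.
  assert (HPU : incl (outcomes P) U)
    by (intros y Hy; unfold U, joint_support; rewrite nodup_In, in_app_iff; auto).
  assert (HQU : incl (outcomes Q) U)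
    by (intros y Hy; unfold U, joint_support; rewrite nodup_In, in_app_iff; auto).
  set (F := fun y z => if bits_eq_dec (f y) z then Rabs (prob P y - prob Q y) else 0).
  assert (Hterm : forall z,
    Rabs (prob (fmapD f P) z - prob (fmapD f Q) z) <= sumR (fun y => F y z) U).
  { intros z; rewrite (prob_fmapD f P z U), (prob_fmapD f Q z U), <- sumR_minus; auto.
    eapply Rle_trans; [apply Rabs_sumR_le|]; apply Req_le, sumR_ext_in; intros y _.
    unfold F; destruct (bits_eq_dec (f y) z); [reflexivity|].
    rewrite Rminus_diag; apply Rabs_R0. }
  assert (Himage : forall y, In y U -> In (f y) (joint_support (fmapD f P) (fmapD f Q))).
  { intros y Hy; unfold U, joint_support, outcomes, fmapD in *.
    rewrite nodup_In, <- map_app in Hy; rewrite nodup_In, !map_map, <- map_app.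
    apply in_map_iff in Hy as [wy [<- Hwy]]; apply in_map_iff; exists wy; auto. }
  eapply Rle_trans; [apply sumR_le; intros z _; apply Hterm|].
  rewrite sumR_comm; apply Req_le, sumR_ext_in; intros y Hy.
  apply sumR_indicator; [apply NoDup_nodup | auto].
Qed.

Definition padD (j : nat) (D : Dist) : Dist := fmapD (app (repeat false j)) D.

Lemma fmapD_skipn_padD j D : fmapD (skipn j) (padD j D) = D.
Proof.
  unfold padD, fmapD; rewrite map_map; rewrite <- (map_id D) at 2.
  apply map_ext; intros [w y]; simpl; f_equal.
  induction j as [|j IH]; simpl; auto.
Qed.

Lemma valid_fmapD f D : valid_dist D -> valid_dist (fmapD f D).
Proof.
  unfold valid_dist, fmapD; intros [Hpos Hsum]; split.
  - apply Forall_map; refine (Forall_impl _ _ Hpos); auto.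
  - rewrite <- Hsum; clear; induction D as [|wy D IH]; simpl; congruence.
Qed.

(** * Quantum circuits define distributions *)

Lemma sumR_allbits_involution n (sg : bits -> bits) f :
  (forall s, length s = n -> length (sg s) = n) ->
  (forall s, length s = n -> sg (sg s) = s) ->
  sumR (fun s => f (sg s)) (allbits n) = sumR f (allbits n).
Proof.
  intros Hlen Hinv; rewrite <- sumR_map; apply sumR_perm, NoDup_Permutation.
  - apply NoDup_map_NoDup_ForallPairs; [|apply NoDup_allbits].
    intros s s' Hs Hs' E; apply In_allbits in Hs, Hs'.
    rewrite <- (Hinv s), <- (Hinv s'), E; auto.
  - apply NoDup_allbits.
  - intros s; rewrite in_map_iff, In_allbits; split.
    + intros [s' [<- Hs']]; apply In_allbits in Hs'; auto.
    + intros Hs; exists (sg s); rewrite In_allbits; auto.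
Qed.

Definition norm2 (n : nat) (psi : bits -> Cx) : R :=
  sumR (fun s => cnorm2 (psi s)) (allbits n).

Lemma sumR_allbits_flip n i f : (i < n)%nat ->
  sumR (fun s => f (flip i s)) (allbits n) = sumR f (allbits n).
Proof.
  intros Hi; apply sumR_allbits_involution; intros s Hs;
    [rewrite length_flip | apply flip_involutive]; lia.
Qed.

Lemma cnorm2_ge0 a : 0 <= cnorm2 a.
Proof. unfold cnorm2; nra. Qed.

Lemma inv_sqrt2_sqr : / sqrt 2 * / sqrt 2 = / 2.
Proof. rewrite <- Rinv_mult, sqrt_sqrt; lra. Qed.

Lemma cnorm2_omega8_mul a : cnorm2 (cmul omega8 a) = cnorm2 a.
Proof.
  pose proof inv_sqrt2_sqr as Hu; unfold cnorm2, cmul, omega8; simpl.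
  set (u := / sqrt 2) in *; destruct a as [x y]; simpl.
  transitivity ((u * u + u * u) * (x * x + y * y)); [ring|]; rewrite Hu; field.
Qed.

Lemma cnorm2_hadamard a b (t : R) : t = 1 \/ t = -1 ->
  cnorm2 (cscale (/ sqrt 2) (cadd a (cscale t b))) =
  / 2 * (cnorm2 a + cnorm2 b) + t * (fst a * fst b + snd a * snd b).
Proof.
  intros Ht; pose proof inv_sqrt2_sqr as Hu; unfold cnorm2, cscale, cadd; simpl.
  set (u := / sqrt 2) in *; destruct a as [a1 a2], b as [b1 b2]; simpl.
  transitivity (u * u * ((a1 + t * b1) * (a1 + t * b1) + (a2 + t * b2) * (a2 + t * b2)));
    [ring|]; rewrite Hu; destruct Ht; subst; field.
Qed.

(* The amplitudes of [s] and [flip i s] mix into the same pair, and the cross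
   terms cancel in pairs since they change sign under [flip i]. *)
Lemma norm2_hadamard n i psi : (i < n)%nat -> norm2 n (apply_gate n (GH i) psi) = norm2 n psi.
Proof.
  intros Hi; unfold norm2, apply_gate; apply Nat.ltb_lt in Hi as Hb; rewrite Hb.
  set (t := fun s : bits => if nth i s false then -1 else 1).
  set (X := fun s : bits => fst (psi (setbit i false s)) * fst (psi (setbit i true s)) +
                            snd (psi (setbit i false s)) * snd (psi (setbit i true s))).
  rewrite (sumR_ext_in _ (fun s => / 2 * (cnorm2 (psi s) + cnorm2 (psi (flip i s))) + t s * X s)).
  2:{ intros s _; rewrite cnorm2_hadamard by (unfold t; destruct (nth i s false); auto).
      unfold t, X, flip; pose proof (setbit_nth i s) as Es.
      destruct (nth i s false); simpl; rewrite Es; ring. }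
  assert (Hcross : sumR (fun s => t s * X s) (allbits n) = 0).
  { assert (Hanti : sumR (fun s => t (flip i s) * X (flip i s)) (allbits n)
                    = sumR (fun s => - (t s * X s)) (allbits n)).
    { apply sumR_ext_in; intros s Hs; apply In_allbits in Hs.
      unfold t, X; rewrite nth_flip by lia; unfold flip; rewrite !setbit_setbit.
      destruct (nth i s false); simpl; ring. }
    rewrite (sumR_allbits_flip n i (fun s => t s * X s)) in Hanti by exact Hi.
    rewrite (sumR_ext_in (fun s => - _) (fun s => 0 - t s * X s)) in Hanti by (intros; ring).
    rewrite sumR_minus, sumR_zero in Hanti; lra. }
  rewrite sumR_plus, sumR_scal, sumR_plus, Hcross.
  rewrite (sumR_allbits_flip n i (fun s => cnorm2 (psi s))) by exact Hi; lra.
Qed.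

Lemma norm2_apply_gate n g psi : norm2 n (apply_gate n g psi) = norm2 n psi.
Proof.
  destruct g as [i|i|i|i j].
  - destruct (Nat.ltb i n) eqn:Hi; [apply norm2_hadamard, Nat.ltb_lt, Hi|].
    unfold apply_gate; rewrite Hi; reflexivity.
  - unfold norm2, apply_gate; destruct (Nat.ltb i n); [|reflexivity].
    apply sumR_ext_in; intros s _.
    destruct (nth i s false); [apply cnorm2_omega8_mul | reflexivity].
  - unfold norm2, apply_gate; destruct (Nat.ltb i n) eqn:Hi; [|reflexivity].
    apply (sumR_allbits_flip n i (fun s => cnorm2 (psi s))), Nat.ltb_lt, Hi.
  - unfold norm2, apply_gate.
    destruct (Nat.ltb i n && Nat.ltb j n && negb (Nat.eqb i j))%bool eqn:Hc; [|reflexivity].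
    apply andb_prop in Hc as [Hc Hij]; apply andb_prop in Hc as [Hi Hj].
    apply Nat.ltb_lt in Hi, Hj; apply Bool.negb_true_iff, Nat.eqb_neq in Hij.
    apply (sumR_allbits_involution n (fun s => if nth i s false then flip j s else s)
                                     (fun s => cnorm2 (psi s))); intros s Hs.
    + destruct (nth i s false); [rewrite length_flip|]; auto.
    + destruct (nth i s false) eqn:E; rewrite ?E; [|reflexivity].
      unfold flip at 1; rewrite nth_setbit_other, E by auto.
      apply flip_involutive; lia.
Qed.

Lemma norm2_psi0 n : norm2 n psi0 = 1.
Proof.
  unfold norm2; induction n as [|n IH]; simpl.
  - unfold psi0, cnorm2; simpl; ring.
  - rewrite sumR_app, !sumR_map.
    rewrite (sumR_ext_in (fun s => cnorm2 (psi0 (true :: s))) (fun _ => 0)), sumR_zero.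
    + rewrite Rplus_0_r; exact IH.
    + intros; unfold psi0, cnorm2; simpl; ring.
Qed.

Lemma valid_circuit_dist C : valid_dist (circuit_dist C).
Proof.
  unfold valid_dist, circuit_dist; split.
  - apply Forall_forall; intros wy Hwy; apply in_map_iff in Hwy as [s [<- _]].
    apply cnorm2_ge0.
  - set (psi := fold_left _ _ _).
    assert (Hpsi : norm2 (c_qubits C) psi = 1).
    { unfold psi; rewrite <- (norm2_psi0 (c_qubits C)); generalize psi0.
      induction (c_gates C) as [|g gs IH]; simpl; intros psi'; auto.
      rewrite IH; apply norm2_apply_gate. }
    rewrite <- Hpsi; unfold norm2; clear.
    induction (allbits (c_qubits C)) as [|s L IH]; simpl; congruence.
Qed.

Lemma circuit_dist_pad_outputs j C :
  circuit_dist (pad_outputs j C) = padD j (circuit_dist C).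
Proof.
  unfold circuit_dist, padD, fmapD; simpl; rewrite map_map; apply map_ext_in.
  intros s Hs; apply In_allbits in Hs; simpl; f_equal; rewrite map_app; f_equal.
  induction j as [|j IH]; simpl; auto.
  rewrite IH, nth_overflow by lia; reflexivity.
Qed.

Lemma floor_nat_INR n : floor_nat (INR n) = n.
Proof.
  unfold floor_nat, Int_part.
  rewrite <- (tech_up (INR n) (Z.of_nat n + 1)).
  - rewrite Z.add_simpl_r; apply Nat2Z.id.
  - rewrite plus_IZR, <- INR_IZR_INZ; simpl; lra.
  - rewrite plus_IZR, <- INR_IZR_INZ; simpl; lra.
Qed.

Section Separation.
Variables (A : QPT) (PA : natpoly).
Hypothesis A_length : forall l, (length (bc_eval A [unary l] []) <= peval PA l)%nat.

Definition pad_length (l : nat) : nat :=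
  peval PA l - length (c_out (decode_circuit (bc_eval A [unary l] []))).

Definition padded_sample (x : bits) : Dist :=
  padD (pad_length (length x)) (qpt_dist A (unary (length x))).

Lemma padded_sample_valid x : valid_dist (padded_sample x).
Proof. apply valid_fmapD, valid_circuit_dist. Qed.

Lemma padded_sample_length x :
  Forall (fun wy => length (snd wy) = peval PA (length x)) (padded_sample x).
Proof.
  unfold padded_sample, padD, fmapD, qpt_dist, circuit_dist, pad_length.
  rewrite map_map; apply Forall_forall; intros wy Hwy.
  apply in_map_iff in Hwy as [s [<- _]]; cbn [snd].
  pose proof (length_c_out_decode_le (bc_eval A [unary (length x)] [])).
  pose proof (A_length (length x)).
  rewrite length_app, repeat_length, length_map; lia.
Qed.

Definition separating_problem : SampProblem :=
  {| sp_len := PA; sp_dist := padded_sample;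
     sp_valid := padded_sample_valid; sp_support := padded_sample_length |}.

Definition bc_pad_length (len : BC) : BC :=
  BComp bc_drop [bc_unary_head (bc_unary_tail (BComp A [len] []))]
                [BComp (bc_poly PA) [len] []].

Lemma bc_pad_length_eval len xs l : bc_eval len xs [] = unary l ->
  bc_eval (bc_pad_length len) xs [] = unary (pad_length l).
Proof.
  intros Hl; unfold bc_pad_length; rewrite bc_eval_BComp; cbn [map].
  rewrite bc_unary_head_eval, bc_unary_tail_eval, bc_eval_BComp; cbn [map].
  rewrite bc_eval_BComp; cbn [map]; rewrite Hl, bc_drop_eval, bc_poly_eval.
  rewrite length_unary, skipn_unary; unfold pad_length; rewrite length_c_out_decode.
  reflexivity.
Qed.

Definition padded_sampler : QPT :=
  bc_pad_description (bc_pad_length bc_enc_length) (BComp A [bc_enc_length] []).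

Lemma qpt_dist_padded_sampler x e :
  qpt_dist padded_sampler (enc_pair x (unary e)) = padded_sample x.
Proof.
  unfold qpt_dist, padded_sampler, padded_sample.
  rewrite (bc_pad_description_eval _ _ _ (pad_length (length x)))
    by (apply bc_pad_length_eval, bc_enc_length_eval).
  rewrite bc_eval_BComp; cbn [map]; rewrite bc_enc_length_eval.
  rewrite decode_pad_description, circuit_dist_pad_outputs; reflexivity.
Qed.

Lemma separating_problem_SampBQP : SampBQP separating_problem.
Proof.
  exists padded_sampler; intros x eps Heps; simpl.
  rewrite qpt_dist_padded_sampler, SD_refl; lra.
Qed.

Section Simulation.
Variables (B : PPT) (p : natpoly).

Definition bc_self_enc : BC :=
  BComp bc_app [BComp bc_double [BProjN 0] []]
               [BComp BS1 [] [BComp BS0 [] [BComp (bc_poly p) [BProjN 0] []]]].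

(* On [1^l], run [B] on the instance [1^l] with accuracy [1/p(l)] and strip the padding. *)
Definition simulator : PPT :=
  {| ppt_prog := BComp bc_drop [bc_pad_length (BProjN 0)]
                               [BComp (ppt_prog B) [bc_self_enc; BProjN 1] []];
     ppt_rand := pcomp (ppt_rand B) (padd [2; 2]%nat p) |}.

Lemma ppt_dist_simulator l :
  ppt_dist simulator (unary l) =
  fmapD (skipn (pad_length l)) (ppt_dist B (enc_pair (unary l) (unary (peval p l)))).
Proof.
  unfold ppt_dist, fmapD, simulator; cbn [ppt_rand ppt_prog].
  replace (peval (pcomp (ppt_rand B) (padd [2; 2]%nat p)) (length (unary l)))
    with (peval (ppt_rand B) (length (enc_pair (unary l) (unary (peval p l))))).
  2:{ rewrite peval_pcomp, peval_padd, length_enc_pair, !length_unary; f_equal; simpl; lia. }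
  rewrite map_map; apply map_ext; intros r; cbn [fst snd]; f_equal.
  rewrite bc_eval_BComp; cbn [map].
  rewrite (bc_pad_length_eval _ _ l) by reflexivity.
  unfold bc_self_enc; cbn [bc_eval map nth].
  rewrite bc_double_eval, bc_poly_eval, bc_app_eval, bc_drop_eval, length_unary.
  reflexivity.
Qed.

End Simulation.

Lemma separating_problem_not_SampBPP (Sigma : nat -> Prop)
  (Hinf : forall N : nat, exists l : nat, (N <= l)%nat /\ Sigma l) :
  QAS Sigma A -> ~ SampBPP separating_problem.
Proof.
  intros [p [Hp HQAS]] [B HB].
  destruct (HQAS (simulator B p)) as [lstar Hfar].
  destruct (Hinf lstar) as [l [Hl HSl]]; specialize (Hfar l Hl HSl).
  assert (Heps : 0 < / INR (peval p l)) by apply Rinv_0_lt_compat, lt_0_INR, Hp.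
  specialize (HB (unary l) _ Heps).
  rewrite Rinv_inv, floor_nat_INR in HB; cbn [sp_dist separating_problem] in HB.
  unfold padded_sample in HB; rewrite length_unary in HB.
  rewrite ppt_dist_simulator, <- (fmapD_skipn_padD (pad_length l) (qpt_dist A (unary l))),
    SD_sym in Hfar.
  pose proof (SD_fmapD_le (skipn (pad_length l))
    (ppt_dist B (enc_pair (unary l) (unary (peval p l))))
    (padD (pad_length l) (qpt_dist A (unary l)))).
  lra.
Qed.

End Separation.

Theorem lemma3p4 (Sigma : nat -> Prop)
  (Hinf : forall N : nat, exists l : nat, (N <= l)%nat /\ Sigma l)
  (Hqas : exists A : QPT, QAS Sigma A) :
  ~ (forall S : SampProblem, SampBPP S <-> SampBQP S).
Proof.
  intros Hequiv; destruct Hqas as [A HA].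
  destruct (bc_length_poly_bounded A) as [PA HPA].
  pose proof (fun l => length_bounded_unary l HPA) as A_length.
  apply (separating_problem_not_SampBPP A PA A_length Sigma Hinf HA).
  apply Hequiv, separating_problem_SampBQP.
Qed.
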